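(* Let $(X,d)$ be a compact metric space with $\mathrm{diam}(X)\le1$ and let $\xi\colon[0,1]\to[-\infty,\infty]$ be an order-preserving homeomorphism. For $A\in\bar J(X)$ define $h_X(A)\colon C(X)\to\mathbb R$ by $h_X(A)(\varphi)=\sup\{\xi(t)\wedge\varphi(x)\mid (x,t)\in A\}$. Then $h_X(A)\in J(X)$ for each $A$, and $h_X\colon\bar J(X)\to J(X)$ is a homeomorphism.
   Context: A max-min measure on a compact Hausdorff space $X$ is a functional $\mu\colon C(X)\to\mathbb R$ (not assumed continuous) such that $\mu(c_X)=c$ for constants $c$, $\mu(\varphi\vee\psi)=\mu(\varphi)\vee\mu(\psi)$, and $\mu(c\wedge\varphi)=c\wedge\mu(\varphi)$ for $c\in\mathbb R$; $J(X)$ is the set of max-min measures with the topology of pointwise convergence on $C(X)$. $\mathrm{Cone}(X)=(X\times[0,1])/(X\times\{0\})$ with metric $\check d((x,s),(y,t))=\min\{s,t\}d(x,y)+|s-t|$; $\exp$ of a metric space is the space of nonempty compact subsets with the Hausdorff metric. A subset $K\subset\mathrm{Cone}(X)$ is saturated if $(x,t)\in K$ implies $(x,t')\in K$ for all $t'\in[0,t]$. $\bar J(X)=\{A\in\exp(\mathrm{Cone}(X))\mid A \text{ saturated and }(x,1)\in A\text{ for some }x\in X\}$, with the Hausdorff metric topology. *)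

From Stdlib Require Import Reals Lra List ClassicalEpsilon.
Open Scope R_scope.

Definition is_metric {X : Type} (d : X -> X -> R) : Prop :=
  (forall x y, 0 <= d x y) /\
  (forall x y, d x y = 0 <-> x = y) /\
  (forall x y, d x y = d y x) /\
  (forall x y z, d x z <= d x y + d y z).

Definition seq_conv {T : Type} (d : T -> T -> R) (u : nat -> T) (l : T) : Prop :=
  forall eps, 0 < eps -> exists N, forall n, (N <= n)%nat -> d (u n) l < eps.

(** sequential compactness of a subset [K] (equivalent to compactness for
    (pseudo)metric spaces) *)
Definition seq_compact {T : Type} (d : T -> T -> R) (K : T -> Prop) : Prop :=
  forall u : nat -> T, (forall n, K (u n)) ->
  exists (g : nat -> nat) (l : T),
    (forall n, (g n < g (S n))%nat) /\ K l /\ seq_conv d (fun n => u (g n)) l.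

Definition compact_metric_space {X : Type} (d : X -> X -> R) : Prop :=
  is_metric d /\ seq_compact d (fun _ => True).

Definition diam_le_1 {X : Type} (d : X -> X -> R) : Prop :=
  forall x y, d x y <= 1.

Definition continuous_on {X : Type} (d : X -> X -> R) (f : X -> R) : Prop :=
  forall x eps, 0 < eps -> exists delta, 0 < delta /\
    forall y, d x y < delta -> Rabs (f y - f x) < eps.

Definition CX {X : Type} (d : X -> X -> R) : Type := { f : X -> R | continuous_on d f }.

Definition fn {X : Type} {d : X -> X -> R} (phi : CX d) : X -> R := proj1_sig phi.

(** * Max-min measures: J(X) (no continuity assumed).
    The operations are written out pointwise: [chi] is the constant function c,
    resp. phi \/ psi, resp. c /\ phi. *)
Definition is_maxmin {X : Type} {d : X -> X -> R} (mu : CX d -> R) : Prop :=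
  (forall (c : R) (chi : CX d), (forall x, fn chi x = c) -> mu chi = c) /\
  (forall phi psi chi : CX d, (forall x, fn chi x = Rmax (fn phi x) (fn psi x)) ->
      mu chi = Rmax (mu phi) (mu psi)) /\
  (forall (c : R) (phi chi : CX d), (forall x, fn chi x = Rmin c (fn phi x)) ->
      mu chi = Rmin c (mu phi)).

(** * The cone.  Points of Cone(X) are represented by pairs (x,t) with t in [0,1];
    the pseudometric below vanishes exactly on identified pairs. *)
Definition cone_dist {X : Type} (d : X -> X -> R) (p q : X * R) : R :=
  Rmin (snd p) (snd q) * d (fst p) (fst q) + Rabs (snd p - snd q).

(** A subset of Cone(X), represented as a predicate on X * [0,1] that is
    closed under the identification X * {0} = vertex. *)
Definition cone_subset {X : Type} (A : X * R -> Prop) : Prop :=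
  (forall x t, A (x, t) -> 0 <= t <= 1) /\
  (forall x y, A (x, 0) -> A (y, 0)).

Definition saturated {X : Type} (A : X * R -> Prop) : Prop :=
  forall x t t', A (x, t) -> 0 <= t' <= t -> A (x, t').

Definition in_barJ {X : Type} (d : X -> X -> R) (A : X * R -> Prop) : Prop :=
  cone_subset A /\
  (exists p, A p) /\ seq_compact (cone_dist d) A /\   (* A in exp(Cone X) *)
  saturated A /\
  (exists x, A (x, 1)).

(** Hausdorff distance: for nonempty compact sets, d_H(A,B) <= r iff every point
    of A is within r of some point of B and vice versa. *)
Definition hausdorff_le {X : Type} (d : X -> X -> R) (A B : X * R -> Prop) (r : R) : Prop :=
  (forall a, A a -> exists b, B b /\ cone_dist d a b <= r) /\
  (forall b, B b -> exists a, A a /\ cone_dist d a b <= r).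

Inductive Rbar : Type := Fin (r : R) | PInf | MInf.

Definition Rbar_le (a b : Rbar) : Prop :=
  match a, b with
  | MInf, _ => True
  | _, PInf => True
  | Fin x, Fin y => x <= y
  | _, _ => False
  end.

(** basic neighbourhoods of the order topology of [-oo, +oo], indexed by e > 0 *)
Definition Rbar_ball (y : Rbar) (e : R) (z : Rbar) : Prop :=
  match y with
  | Fin r => exists r', z = Fin r' /\ Rabs (r' - r) < e
  | PInf => z = PInf \/ exists r', z = Fin r' /\ / e < r'
  | MInf => z = MInf \/ exists r', z = Fin r' /\ r' < - / e
  end.

Definition order_homeo (xi : R -> Rbar) : Prop :=
  (forall s t, 0 <= s -> s <= t -> t <= 1 -> Rbar_le (xi s) (xi t)) /\
  (forall s t, 0 <= s <= 1 -> 0 <= t <= 1 -> xi s = xi t -> s = t) /\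
  (forall y, exists t, 0 <= t <= 1 /\ xi t = y) /\
  (forall t e, 0 <= t <= 1 -> 0 < e -> exists delta, 0 < delta /\
     forall s, 0 <= s <= 1 -> Rabs (s - t) < delta -> Rbar_ball (xi t) e (xi s)) /\
  (forall t delta, 0 <= t <= 1 -> 0 < delta -> exists e, 0 < e /\
     forall s, 0 <= s <= 1 -> Rbar_ball (xi t) e (xi s) -> Rabs (s - t) < delta).

Definition Rbar_min (a : Rbar) (r : R) : Rbar :=
  match a with
  | Fin x => Fin (Rmin x r)
  | PInf => Fin r
  | MInf => MInf
  end.

Definition is_sup_Rbar (S : Rbar -> Prop) (l : R) : Prop :=
  (forall z, S z -> Rbar_le z (Fin l)) /\
  (forall u, (forall z, S z -> Rbar_le z u) -> Rbar_le (Fin l) u).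

Definition hset {X : Type} {d : X -> X -> R} (xi : R -> Rbar)
  (A : X * R -> Prop) (phi : CX d) : Rbar -> Prop :=
  fun z => exists x t, A (x, t) /\ z = Rbar_min (xi t) (fn phi x).

Definition hX {X : Type} (d : X -> X -> R) (xi : R -> Rbar)
  (A : X * R -> Prop) (phi : CX d) : R :=
  epsilon (inhabits 0) (fun l => is_sup_Rbar (hset xi A phi) l).

(* [h_X(A)(phi)] is the supremum of [min (xi t) (phi x)] over [(x,t) in A]; it is finite
   because [A] meets the top [X * {1}], and the max-min axioms follow from the distributivity
   of [min] over [max].  Conversely, a max-min measure [mu] is recovered from the set of
   [(x,t)] such that [xi t <= c] whenever [mu] only sees values below [c] near [x]; a
   Lebesgue-number and finite-net argument shows that [h_X] maps this set onto [mu].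
   Continuity of [h_X] comes from uniform continuity of [phi], since away from the vertex the
   cone metric controls the distance in [X].  Continuity of the inverse uses finitely many tent
   functions centred at a net of [X * [0,1]], which detect whether a set reaches a given height
   near a given point.  Injectivity follows: if [h_X A = h_X B] these tests put [A] in the
   closure of [B], which is compact, hence closed, for the cone metric. *)

From Stdlib Require Import Reals Lra Lia List Rtopology Classical ClassicalEpsilon.
Open Scope R_scope.

Definition strict_incr (g : nat -> nat) : Prop := forall n, (g n < g (S n))%nat.

Lemma strict_incr_lt g : strict_incr g -> forall m n, (m < n)%nat -> (g m < g n)%nat.
Proof.
  intros Hg m n Hmn; induction Hmn; [apply Hg|]. specialize (Hg m0); lia.
Qed.

Lemma strict_incr_ge g : strict_incr g -> forall n, (n <= g n)%nat.
Proof. intros Hg n; induction n; [lia|]. specialize (Hg n); lia. Qed.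

Lemma inv_succ_pos n : 0 < / (INR n + 1).
Proof. apply Rinv_0_lt_compat. pose proof (pos_INR n). lra. Qed.

Lemma inv_succ_small eps : 0 < eps ->
  exists N, forall n, (N <= n)%nat -> / (INR n + 1) < eps.
Proof.
  intros He. destruct (archimed_cor1 eps He) as [N [HN HN0]].
  exists N. intros n Hn.
  assert (0 < INR N) by (apply lt_0_INR; lia).
  assert (INR N <= INR n) by (apply le_INR; lia).
  apply Rle_lt_trans with (/ INR N); [apply Rinv_le_contravar|]; lra.
Qed.

Definition cluster_point {T : Type} (D : T -> T -> R) (u : nat -> T) (l : T) : Prop :=
  forall eps N, 0 < eps -> exists n, (N <= n)%nat /\ D (u n) l < eps.

Lemma seq_compact_cluster {T : Type} (D : T -> T -> R) (K : T -> Prop) :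
  seq_compact D K -> forall u, (forall n, K (u n)) -> exists l, K l /\ cluster_point D u l.
Proof.
  intros HK u Hu. destruct (HK u Hu) as [g [l [Hg [Kl Hconv]]]].
  exists l; split; [exact Kl|]. intros eps N He.
  destruct (Hconv eps He) as [M HM]. exists (g (max N M)). split.
  - pose proof (strict_incr_ge g Hg (max N M)); lia.
  - apply HM; lia.
Qed.

Lemma cluster_subseq {T : Type} (D : T -> T -> R) u l :
  cluster_point D u l -> exists g, strict_incr g /\ seq_conv D (fun n => u (g n)) l.
Proof.
  intros Hc.
  assert (Hch : forall N k, exists n, (N <= n)%nat /\ D (u n) l < / (INR k + 1))
    by (intros N k; apply Hc, inv_succ_pos).
  destruct (choice (fun Nk n => (fst Nk <= n)%nat /\ D (u n) l < / (INR (snd Nk) + 1)))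
    as [pick Hpick]; [intros [N k]; apply Hch|].
  set (g := fix g n := match n with O => pick (O, O) | S m => pick (S (g m), S m) end).
  assert (Hg : forall n, D (u (g n)) l < / (INR n + 1))
    by (intros [|n]; apply (Hpick (_, _))).
  exists g. split.
  - intros n. apply (Hpick (S (g n), S n)).
  - intros eps He. destruct (inv_succ_small eps He) as [N HN].
    exists N. intros n Hn. eapply Rlt_trans; [apply Hg|auto].
Qed.

Lemma unit_interval_seq_compact :
  seq_compact (fun a b => Rabs (a - b)) (fun t => 0 <= t <= 1).
Proof.
  intros u Hu.
  destruct (Bolzano_Weierstrass u _ (compact_P3 0 1) Hu) as [l Hl].
  assert (Hc : cluster_point (fun a b => Rabs (a - b)) u l).
  { intros eps N He. apply (Hl (disc l (mkposreal eps He))).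
    exists (mkposreal eps He). intros y Hy; exact Hy. }
  destruct (cluster_subseq _ _ _ Hc) as [g [Hg Hconv]].
  exists g, l. split; [exact Hg|split; [|exact Hconv]].
  split; apply Rnot_lt_le; intros Hout.
  - destruct (Hc (- l) O ltac:(lra)) as [n [_ Hn]].
    specialize (Hu n). apply Rabs_def2 in Hn. lra.
  - destruct (Hc (l - 1) O ltac:(lra)) as [n [_ Hn]].
    specialize (Hu n). apply Rabs_def2 in Hn. lra.
Qed.

Definition prod_dist {X : Type} (d : X -> X -> R) (p q : X * R) : R :=
  d (fst p) (fst q) + Rabs (snd p - snd q).

Definition unit_strip {X : Type} (p : X * R) : Prop := 0 <= snd p <= 1.

Lemma prod_seq_compact {X : Type} (d : X -> X -> R) :
  seq_compact d (fun _ => True) -> seq_compact (prod_dist d) unit_strip.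
Proof.
  intros HC u Hu.
  destruct (HC (fun n => fst (u n)) (fun _ => I)) as [g1 [x [Hg1 [_ Hx]]]].
  destruct (unit_interval_seq_compact (fun n => snd (u (g1 n))) (fun n => Hu (g1 n)))
    as [g2 [t [Hg2 [Ht Htc]]]].
  exists (fun n => g1 (g2 n)), (x, t). split; [|split; [exact Ht|]].
  - intros n. apply strict_incr_lt; auto.
  - intros eps He.
    destruct (Hx (eps / 2) ltac:(lra)) as [N1 HN1].
    destruct (Htc (eps / 2) ltac:(lra)) as [N2 HN2].
    exists (max N1 N2). intros n Hn. unfold prod_dist; simpl.
    pose proof (strict_incr_ge g2 Hg2 n).
    specialize (HN1 (g2 n) ltac:(lia)). specialize (HN2 n ltac:(lia)). simpl in *. lra.
Qed.

Lemma seq_compact_finite_net {T : Type} (D : T -> T -> R) (K : T -> Prop) :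
  (forall x y, D x y = D y x) -> (forall x y z, D x z <= D x y + D y z) ->
  seq_compact D K -> forall rho, 0 < rho ->
  exists net, (forall w, In w net -> K w) /\ forall x, K x -> exists w, In w net /\ D w x < rho.
Proof.
  intros Hsym Htri HK rho Hr. apply NNPP; intros Hno.
  assert (Hfar : forall net, exists x, (forall w, In w net -> K w) ->
                   K x /\ forall w, In w net -> rho <= D w x).
  { intros net. apply NNPP; intros H. apply Hno. exists net.
    split; [intros w Hw; apply NNPP; intros Hw'; apply H; exists w; intros Hall;
             exfalso; apply Hw', Hall, Hw|].
    intros x Kx. apply NNPP; intros Hx. apply H. exists x. intros _. split; [exact Kx|].
    intros w Hw. apply Rnot_lt_le. intros Hlt. apply Hx. exists w; auto. }
  destruct (choice _ Hfar) as [F HF].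
  set (pts := fix pts n := match n with O => nil | S m => F (pts m) :: pts m end).
  assert (HK_pts : forall n w, In w (pts n) -> K w).
  { induction n as [|n IH]; simpl; [tauto|]. intros w [<-|Hw]; [apply HF|]; auto. }
  assert (Hin : forall m n, (m < n)%nat -> In (F (pts m)) (pts n))
    by (intros m n Hmn; induction Hmn; simpl; auto).
  destruct (seq_compact_cluster D K HK (fun n => F (pts n)) (fun n => proj1 (HF _ (HK_pts n))))
    as [l [_ Hl]].
  destruct (Hl (rho / 2) O ltac:(lra)) as [m [_ Hm]].
  destruct (Hl (rho / 2) (S m) ltac:(lra)) as [n [Hmn Hn]].
  pose proof (proj2 (HF _ (HK_pts n)) _ (Hin m n Hmn)) as Hfar_mn.
  pose proof (Htri (F (pts m)) l (F (pts n))) as Hmln. rewrite (Hsym l) in Hmln.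
  simpl in *. lra.
Qed.

Lemma seq_compact_closed {T : Type} (D : T -> T -> R) (S K : T -> Prop) :
  (forall x y, S x -> S y -> 0 <= D x y) ->
  (forall x y z, S x -> S y -> S z -> D x z <= D x y + D y z) ->
  (forall x, K x -> S x) -> seq_compact D K ->
  forall p, S p -> (forall eps, 0 < eps -> exists k, K k /\ D p k < eps) ->
  exists l, K l /\ D p l = 0.
Proof.
  intros Hpos Htri HKS HK p Sp Hp.
  destruct (choice (fun n k => K k /\ D p k < / (INR n + 1))) as [u Hu];
    [intros n; apply Hp, inv_succ_pos|].
  destruct (seq_compact_cluster D K HK u (fun n => proj1 (Hu n))) as [l [Kl Hl]].
  exists l. split; [exact Kl|]. apply Rle_antisym; [|apply Hpos; auto].
  apply Rnot_lt_le. intros Hlt. set (eps := D p l) in *.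
  destruct (inv_succ_small (eps / 2) ltac:(lra)) as [N HN].
  destruct (Hl (eps / 2) N ltac:(lra)) as [n [Hn Hnl]].
  pose proof (Htri p (u n) l Sp (HKS _ (proj1 (Hu n))) (HKS _ Kl)).
  pose proof (proj2 (Hu n)). specialize (HN n Hn). unfold eps in *. lra.
Qed.

Section Metric.
Context {X : Type} (d : X -> X -> R).

Section MetricAxioms.
Hypothesis Hm : is_metric d.

Lemma metric_nonneg x y : 0 <= d x y.
Proof. apply Hm. Qed.
Lemma metric_eq0 x y : d x y = 0 -> x = y.
Proof. apply Hm. Qed.
Lemma metric_sym x y : d x y = d y x.
Proof. apply Hm. Qed.
Lemma metric_tri x y z : d x z <= d x y + d y z.
Proof. apply Hm. Qed.

Lemma prod_dist_sym p q : prod_dist d p q = prod_dist d q p.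
Proof. unfold prod_dist. rewrite metric_sym, Rabs_minus_sym. reflexivity. Qed.

Lemma prod_dist_tri p q r : prod_dist d p r <= prod_dist d p q + prod_dist d q r.
Proof.
  unfold prod_dist. pose proof (metric_tri (fst p) (fst q) (fst r)).
  pose proof (Rabs_triang (snd p - snd q) (snd q - snd r)) as Ht.
  replace (snd p - snd q + (snd q - snd r)) with (snd p - snd r) in Ht by ring. lra.
Qed.

End MetricAxioms.

Section Compact.
Hypothesis HX : compact_metric_space d.

Lemma compact_cluster (u : nat -> X) : exists x, cluster_point d u x.
Proof.
  destruct (seq_compact_cluster d _ (proj2 HX) u (fun _ => I)) as [x [_ Hx]]. eauto.
Qed.

Lemma continuous_bounded f : continuous_on d f -> exists M, forall x, Rabs (f x) <= M.
Proof.
  intros Hf. apply NNPP; intros Hno.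
  assert (H : forall n : nat, exists x, INR n < Rabs (f x)).
  { intros n. apply NNPP; intros H. apply Hno. exists (INR n). intros x.
    apply Rnot_lt_le. intros H2. apply H. eauto. }
  destruct (choice _ H) as [u Hu]. destruct (compact_cluster u) as [x Hx].
  destruct (Hf x 1 Rlt_0_1) as [delta [Hdelta Hclose]].
  destruct (INR_unbounded (Rabs (f x) + 1)) as [N HN].
  destruct (Hx delta N Hdelta) as [n [Hn Hux]].
  rewrite (metric_sym (proj1 HX)) in Hux. specialize (Hclose _ Hux). specialize (Hu n).
  assert (INR N <= INR n) by (apply le_INR; lia).
  pose proof (Rabs_triang_inv (f (u n)) (f x)). lra.
Qed.

Lemma uniformly_continuous f : continuous_on d f -> forall eps, 0 < eps ->
  exists delta, 0 < delta /\ forall x y, d x y < delta -> Rabs (f x - f y) < eps.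
Proof.
  intros Hf eps He. apply NNPP; intros Hno.
  assert (H : forall n : nat, exists p : X * X,
    d (fst p) (snd p) < / (INR n + 1) /\ eps <= Rabs (f (fst p) - f (snd p))).
  { intros n. apply NNPP; intros H. apply Hno. exists (/ (INR n + 1)).
    split; [apply inv_succ_pos|]. intros x y Hxy. apply Rnot_le_lt. intros H2.
    apply H. exists (x, y); auto. }
  destruct (choice _ H) as [u Hu]. destruct (compact_cluster (fun n => fst (u n))) as [x Hx].
  destruct (Hf x (eps / 2) ltac:(lra)) as [delta [Hdelta Hclose]].
  destruct (inv_succ_small (delta / 2) ltac:(lra)) as [N HN].
  destruct (Hx (delta / 2) N ltac:(lra)) as [n [Hn Hxn]].
  destruct (Hu n) as [Hab Hfab]. specialize (HN n Hn).
  set (a := fst (u n)) in *. set (b := snd (u n)) in *.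
  pose proof (metric_tri (proj1 HX) x a b) as Hxb. rewrite (metric_sym (proj1 HX) x a) in Hxb.
  pose proof (Hclose a ltac:(rewrite (metric_sym (proj1 HX)); lra)) as Ha.
  pose proof (Hclose b ltac:(lra)) as Hb.
  pose proof (Rabs_triang (f a - f x) (f x - f b)) as Hab'. rewrite Rabs_minus_sym in Hb.
  replace (f a - f x + (f x - f b)) with (f a - f b) in Hab' by ring. lra.
Qed.

Lemma lebesgue_number (G : (X -> Prop) -> Prop) :
  (forall U V : X -> Prop, G U -> (forall y, V y -> U y) -> G V) ->
  (forall x, exists r, 0 < r /\ G (fun y => d x y < r)) ->
  exists s, 0 < s /\ forall x, G (fun y => d x y < s).
Proof.
  intros Hsub Hloc. apply NNPP; intros Hno.
  assert (H : forall n : nat, exists x, ~ G (fun y => d x y < / (INR n + 1))).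
  { intros n. apply NNPP; intros H. apply Hno. exists (/ (INR n + 1)).
    split; [apply inv_succ_pos|]. intros x. apply NNPP; intros Hx. apply H. exists x; exact Hx. }
  destruct (choice _ H) as [u Hu]. destruct (compact_cluster u) as [x Hx].
  destruct (Hloc x) as [r [Hr Gr]].
  destruct (inv_succ_small (r / 2) ltac:(lra)) as [N HN].
  destruct (Hx (r / 2) N ltac:(lra)) as [n [Hn Hxn]].
  apply (Hu n). apply (Hsub _ _ Gr). intros y Hy.
  pose proof (metric_tri (proj1 HX) x (u n) y) as Hxy.
  rewrite (metric_sym (proj1 HX) x (u n)) in Hxy.
  specialize (HN n Hn). lra.
Qed.

End Compact.
End Metric.

Lemma Rmax_close a b a' b' e :
  Rabs (a - a') < e -> Rabs (b - b') < e -> Rabs (Rmax a b - Rmax a' b') < e.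
Proof.
  intros Ha Hb. apply Rabs_def2 in Ha. apply Rabs_def2 in Hb.
  apply Rabs_def1; unfold Rmax; destruct (Rle_dec a b), (Rle_dec a' b'); lra.
Qed.

Lemma Rmin_close a b a' b' e :
  Rabs (a - a') < e -> Rabs (b - b') < e -> Rabs (Rmin a b - Rmin a' b') < e.
Proof.
  intros Ha Hb. apply Rabs_def2 in Ha. apply Rabs_def2 in Hb.
  apply Rabs_def1; unfold Rmin; destruct (Rle_dec a b), (Rle_dec a' b'); lra.
Qed.

Section ContinuousFunctions.
Context {X : Type} (d : X -> X -> R).

Lemma continuous_on_const c : continuous_on d (fun _ => c).
Proof.
  intros x e He. exists 1. split; [lra|]. intros y _. rewrite Rminus_diag, Rabs_R0; exact He.
Qed.

Lemma continuous_on_max f g : continuous_on d f -> continuous_on d g ->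
  continuous_on d (fun x => Rmax (f x) (g x)).
Proof.
  intros Hf Hg x e He.
  destruct (Hf x e He) as [d1 [H1 H1']]. destruct (Hg x e He) as [d2 [H2 H2']].
  exists (Rmin d1 d2). split; [apply Rmin_glb_lt; auto|]. intros y Hy.
  pose proof (Rmin_l d1 d2). pose proof (Rmin_r d1 d2).
  apply Rmax_close; [apply H1'|apply H2']; lra.
Qed.

Lemma continuous_on_min f g : continuous_on d f -> continuous_on d g ->
  continuous_on d (fun x => Rmin (f x) (g x)).
Proof.
  intros Hf Hg x e He.
  destruct (Hf x e He) as [d1 [H1 H1']]. destruct (Hg x e He) as [d2 [H2 H2']].
  exists (Rmin d1 d2). split; [apply Rmin_glb_lt; auto|]. intros y Hy.
  pose proof (Rmin_l d1 d2). pose proof (Rmin_r d1 d2).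
  apply Rmin_close; [apply H1'|apply H2']; lra.
Qed.

Definition ccst (c : R) : CX d := exist _ (fun _ => c) (continuous_on_const c).

Definition cmax (f g : CX d) : CX d :=
  exist _ (fun x => Rmax (fn f x) (fn g x)) (continuous_on_max _ _ (proj2_sig f) (proj2_sig g)).

Definition cminc (c : R) (f : CX d) : CX d :=
  exist _ (fun x => Rmin c (fn f x))
    (continuous_on_min _ _ (continuous_on_const c) (proj2_sig f)).

Section Tent.
Hypothesis Hm : is_metric d.

Lemma continuous_on_lipschitz f K : 0 <= K ->
  (forall x y, Rabs (f y - f x) <= K * d x y) -> continuous_on d f.
Proof.
  intros HK Hf x e He. exists (e / (K + 1)). split; [apply Rdiv_lt_0_compat; lra|].
  intros y Hy. apply Rmult_lt_compat_r with (r := K + 1) in Hy; [|lra].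
  unfold Rdiv in Hy. rewrite Rmult_assoc, Rinv_l, Rmult_1_r in Hy by lra.
  pose proof (Hf x y). pose proof (metric_nonneg d Hm x y). nra.
Qed.

Definition tent_fun (w : X) (lo hi r : R) (y : X) : R := Rmax lo (hi - (hi - lo) / r * d w y).

Lemma continuous_on_tent w lo hi r : continuous_on d (tent_fun w lo hi r).
Proof.
  apply continuous_on_max; [apply continuous_on_const|].
  apply continuous_on_lipschitz with (K := Rabs ((hi - lo) / r)); [apply Rabs_pos|].
  intros x y. set (k := (hi - lo) / r).
  replace (hi - k * d w y - (hi - k * d w x)) with (k * (d w x - d w y)) by ring.
  rewrite Rabs_mult. apply Rmult_le_compat_l; [apply Rabs_pos|]. apply Rabs_le.
  pose proof (metric_tri d Hm w x y). pose proof (metric_tri d Hm w y x) as Hwx.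
  rewrite (metric_sym d Hm y x) in Hwx. lra.
Qed.

Definition tent w lo hi r : CX d := exist _ (tent_fun w lo hi r) (continuous_on_tent w lo hi r).

Lemma tent_ge w lo hi r y : hi - (hi - lo) / r * d w y <= fn (tent w lo hi r) y.
Proof. apply Rmax_r. Qed.

Lemma tent_far w lo hi r y : lo <= hi -> 0 < r -> r <= d w y -> fn (tent w lo hi r) y = lo.
Proof.
  intros Hlh Hr Hy. apply Rmax_left.
  assert (Hk : (hi - lo) / r * r = hi - lo) by (field; lra).
  assert (0 <= (hi - lo) / r) by (apply Rle_mult_inv_pos; lra).
  nra.
Qed.

Lemma tent_above_mid w lo hi r y : lo < hi -> 0 < r ->
  (lo + hi) / 2 < fn (tent w lo hi r) y -> d w y < r / 2.
Proof.
  intros Hlh Hr Hy. simpl in Hy. unfold tent_fun, Rmax in Hy. destruct Rle_dec; [|lra].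
  assert (Hk : (hi - lo) / r * r = hi - lo) by (field; lra).
  assert (0 < (hi - lo) / r) by (apply Rdiv_lt_0_compat; lra).
  nra.
Qed.

End Tent.
End ContinuousFunctions.

Lemma Rbar_le_trans a b c : Rbar_le a b -> Rbar_le b c -> Rbar_le a c.
Proof. destruct a, b, c; simpl; tauto || lra. Qed.

Lemma Rbar_le_antisym a b : Rbar_le a b -> Rbar_le b a -> a = b.
Proof. destruct a, b; simpl; try tauto. intros; f_equal; lra. Qed.

Lemma Rbar_not_le z v : ~ Rbar_le z (Fin v) -> Rbar_le (Fin v) z.
Proof. destruct z; simpl; auto. lra. Qed.

Lemma Rbar_min_ge_iff a r v : Rbar_le (Fin v) (Rbar_min a r) <-> Rbar_le (Fin v) a /\ v <= r.
Proof.
  destruct a; simpl; try tauto.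
  unfold Rmin; destruct Rle_dec; split; intros; lra.
Qed.

Lemma Rbar_min_le_iff a r v : Rbar_le (Rbar_min a r) (Fin v) <-> Rbar_le a (Fin v) \/ r <= v.
Proof.
  destruct a; simpl; try tauto.
  unfold Rmin; destruct Rle_dec; split; intros; lra.
Qed.

Lemma Rbar_min_mono a r r' : r <= r' -> Rbar_le (Rbar_min a r) (Rbar_min a r').
Proof. destruct a; simpl; auto. intros. unfold Rmin; repeat destruct Rle_dec; lra. Qed.

Lemma Rbar_gap a m b : ~ Rbar_le a (Fin m) -> m < b ->
  exists c, m < c < b /\ ~ Rbar_le a (Fin c).
Proof.
  destruct a as [v| |]; simpl; intros H Hb.
  - exists ((m + Rmin v b) / 2). unfold Rmin; destruct Rle_dec; split; lra.
  - exists ((m + b) / 2). split; [lra|tauto].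
  - tauto.
Qed.

Section Supremum.
Variables (S : Rbar -> Prop) (l : R).
Hypothesis Hl : is_sup_Rbar S l.

Lemma sup_ub z : S z -> Rbar_le z (Fin l).
Proof. apply Hl. Qed.

Lemma sup_least v : (forall z, S z -> Rbar_le z (Fin v)) -> l <= v.
Proof. apply Hl. Qed.

Lemma le_sup z v : S z -> Rbar_le (Fin v) z -> v <= l.
Proof. intros Hz Hv. exact (Rbar_le_trans _ _ _ Hv (sup_ub z Hz)). Qed.

Lemma sup_approx v : v < l -> exists z, S z /\ ~ Rbar_le z (Fin v).
Proof.
  intros Hv. apply NNPP; intros Hno.
  assert (l <= v); [|lra].
  apply sup_least. intros z Hz. apply NNPP; intros H. apply Hno. eauto.
Qed.

End Supremum.

Lemma is_sup_Rbar_unique S l l' : is_sup_Rbar S l -> is_sup_Rbar S l' -> l = l'.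
Proof.
  intros Hl Hl'. apply Rle_antisym; [apply (sup_least S l Hl)|apply (sup_least S l' Hl')];
    intros z Hz; eapply sup_ub; eauto.
Qed.

Section OrderHomeo.
Variable xi : R -> Rbar.
Hypothesis Hxi : order_homeo xi.

Lemma xi_le_iff s t : 0 <= s <= 1 -> 0 <= t <= 1 -> Rbar_le (xi s) (xi t) <-> s <= t.
Proof.
  intros Hs Ht. destruct Hxi as [Hmono [Hinj _]]. split; [|intros; apply Hmono; lra].
  intros Hle. apply Rnot_lt_le. intros Hlt.
  assert (s = t) by (apply Hinj; auto; apply Rbar_le_antisym; auto; apply Hmono; lra).
  lra.
Qed.

Lemma xi_0 : xi 0 = MInf.
Proof.
  destruct Hxi as [Hmono [_ [Hsurj _]]]. destruct (Hsurj MInf) as [t [Ht E]].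
  pose proof (Hmono 0 t ltac:(lra) ltac:(lra) ltac:(lra)) as H. rewrite E in H.
  destruct (xi 0); simpl in H; tauto.
Qed.

Lemma xi_1 : xi 1 = PInf.
Proof.
  destruct Hxi as [Hmono [_ [Hsurj _]]]. destruct (Hsurj PInf) as [t [Ht E]].
  pose proof (Hmono t 1 ltac:(lra) ltac:(lra) ltac:(lra)) as H. rewrite E in H.
  destruct (xi 1); simpl in H; tauto.
Qed.

Lemma xi_finite t : 0 < t < 1 -> exists v, xi t = Fin v.
Proof.
  intros Ht. destruct Hxi as [_ [Hinj _]]. destruct (xi t) eqn:E; eauto.
  - rewrite <- xi_1 in E. apply Hinj in E; lra.
  - rewrite <- xi_0 in E. apply Hinj in E; lra.
Qed.

Lemma xi_preimage v : exists t, 0 < t < 1 /\ xi t = Fin v.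
Proof.
  destruct Hxi as [_ [_ [Hsurj _]]]. destruct (Hsurj (Fin v)) as [t [Ht E]].
  exists t. split; [|exact E].
  split; apply Rnot_ge_lt; intros Hb.
  - assert (t = 0) by lra. subst. rewrite xi_0 in E. discriminate.
  - assert (t = 1) by lra. subst. rewrite xi_1 in E. discriminate.
Qed.

Lemma xi_fin_lt_iff s t v w : 0 <= s <= 1 -> 0 <= t <= 1 ->
  xi s = Fin v -> xi t = Fin w -> v < w <-> s < t.
Proof.
  intros Hs Ht Ev Ew. split; intros Hlt; apply Rnot_le_lt; intros Hle.
  - apply (xi_le_iff t s Ht Hs) in Hle. rewrite Ev, Ew in Hle. simpl in Hle. lra.
  - assert (Hts : Rbar_le (xi t) (xi s)) by (rewrite Ev, Ew; exact Hle).
    apply xi_le_iff in Hts; lra.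
Qed.

End OrderHomeo.

Section Cone.
Context {X : Type} (d : X -> X -> R).
Hypothesis Hm : is_metric d.

Lemma cone_dist_sym p q : cone_dist d p q = cone_dist d q p.
Proof. unfold cone_dist. rewrite Rmin_comm, (metric_sym d Hm), Rabs_minus_sym. reflexivity. Qed.

Lemma cone_dist_nonneg p q : 0 <= snd p -> 0 <= snd q -> 0 <= cone_dist d p q.
Proof.
  intros Hp Hq. unfold cone_dist. pose proof (Rabs_pos (snd p - snd q)).
  pose proof (metric_nonneg d Hm (fst p) (fst q)).
  assert (0 <= Rmin (snd p) (snd q)) by (apply Rmin_glb; lra). nra.
Qed.

Lemma cone_dist_time p q : 0 <= snd p -> 0 <= snd q -> Rabs (snd p - snd q) <= cone_dist d p q.
Proof.
  intros Hp Hq. unfold cone_dist. pose proof (metric_nonneg d Hm (fst p) (fst q)).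
  assert (0 <= Rmin (snd p) (snd q)) by (apply Rmin_glb; lra). nra.
Qed.

Lemma cone_dist_space p q : Rmin (snd p) (snd q) * d (fst p) (fst q) <= cone_dist d p q.
Proof. unfold cone_dist. pose proof (Rabs_pos (snd p - snd q)). lra. Qed.

Lemma cone_dist_le_prod p q : unit_strip p -> unit_strip q -> cone_dist d p q <= prod_dist d p q.
Proof.
  unfold unit_strip, cone_dist, prod_dist. intros Hp Hq.
  pose proof (metric_nonneg d Hm (fst p) (fst q)).
  assert (Rmin (snd p) (snd q) <= 1) by (eapply Rle_trans; [apply Rmin_l|lra]).
  assert (0 <= Rmin (snd p) (snd q)) by (apply Rmin_glb; lra). nra.
Qed.

Lemma cone_dist_eq0 p q : 0 < snd p -> 0 <= snd q -> cone_dist d p q = 0 -> p = q.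
Proof.
  intros Hp Hq Hzero. destruct p as [x s], q as [y t]; simpl in *.
  pose proof (cone_dist_time (x, s) (y, t) ltac:(simpl; lra) Hq) as Ht.
  pose proof (cone_dist_space (x, s) (y, t)) as Hs. simpl in Ht, Hs. rewrite Hzero in Ht, Hs.
  assert (s = t) by (unfold Rabs in Ht; destruct Rcase_abs; lra). subst t.
  rewrite Rmin_left in Hs by lra. pose proof (metric_nonneg d Hm x y).
  assert (d x y = 0) by nra. rewrite (metric_eq0 d Hm x y); auto.
Qed.

(** This is where [diam X <= 1] is needed. *)
Lemma cone_dist_tri : diam_le_1 d -> forall p q r, 0 <= snd p -> 0 <= snd q -> 0 <= snd r ->
  cone_dist d p r <= cone_dist d p q + cone_dist d q r.
Proof.
  intros Hdiam [x s] [y t] [z u]; unfold cone_dist; simpl. intros Hs Ht Hu.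
  pose proof (metric_tri d Hm x y z). pose proof (Hdiam x z).
  pose proof (metric_nonneg d Hm x y). pose proof (metric_nonneg d Hm y z).
  pose proof (metric_nonneg d Hm x z).
  unfold Rmin, Rabs; repeat destruct Rle_dec; repeat destruct Rcase_abs; nra.
Qed.

End Cone.

Section BarJ.
Context {X : Type} (d : X -> X -> R) (A : X * R -> Prop).
Hypothesis HA : in_barJ d A.

Lemma barJ_strip x t : A (x, t) -> 0 <= t <= 1.
Proof. apply HA. Qed.

Lemma barJ_saturated : saturated A.
Proof. apply HA. Qed.

Lemma barJ_seq_compact : seq_compact (cone_dist d) A.
Proof. apply HA. Qed.

Lemma barJ_top : exists x, A (x, 1).
Proof. apply HA. Qed.

Lemma barJ_vertex x : A (x, 0).
Proof.
  destruct barJ_top as [y Hy]. apply (proj2 (proj1 HA) y).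
  apply (barJ_saturated y 1); [exact Hy|lra].
Qed.

End BarJ.

Section HX.
Context {X : Type} (d : X -> X -> R) (xi : R -> Rbar).
Hypotheses (HX : compact_metric_space d) (Hxi : order_homeo xi).

Lemma hX_is_sup A : (exists x, A (x, 1)) ->
  forall phi : CX d, is_sup_Rbar (hset xi A phi) (hX d xi A phi).
Proof.
  intros [x1 Hx1] phi. apply (epsilon_spec (inhabits 0) (is_sup_Rbar (hset xi A phi))).
  assert (Htop : hset xi A phi (Fin (fn phi x1))).
  { exists x1, 1. split; [exact Hx1|]. rewrite (xi_1 xi Hxi). reflexivity. }
  destruct (continuous_bounded d HX (fn phi) (proj2_sig phi)) as [M HM].
  set (E := fun r => hset xi A phi (Fin r)).
  destruct (completeness E) as [l [Hub Hlub]]; [|exists (fn phi x1); exact Htop|].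
  { exists M. intros r [x [t [_ Hr]]].
    assert (Hrx : Rbar_le (Fin r) (Rbar_min (xi t) (fn phi x))) by (rewrite <- Hr; simpl; lra).
    apply Rbar_min_ge_iff in Hrx. specialize (HM x). pose proof (Rle_abs (fn phi x)). lra. }
  exists l. split.
  - intros [r| |] Hz; simpl; [apply Hub; exact Hz| |exact I].
    destruct Hz as [x [t [_ E']]]. destruct (xi t); discriminate.
  - intros [v| |] Hu; simpl; [|exact I|exact (Hu _ Htop)].
    apply Hlub. intros r Hr. exact (Hu _ Hr).
Qed.

Lemma hX_mono A phi psi : (exists x, A (x, 1)) ->
  (forall x, fn phi x <= fn psi x) -> hX d xi A phi <= hX d xi A psi.
Proof.
  intros Htop Hle. apply (sup_least _ _ (hX_is_sup A Htop phi)). intros z [x [t [Hxt ->]]].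
  eapply Rbar_le_trans; [apply (Rbar_min_mono _ _ _ (Hle x))|].
  apply (sup_ub _ _ (hX_is_sup A Htop psi)). exists x, t; auto.
Qed.

Lemma hX_maxmin A : (exists x, A (x, 1)) -> is_maxmin (hX d xi A).
Proof.
  intros Htop. pose proof (hX_is_sup A Htop) as Hsup. split; [|split].
  - intros c chi Hchi. destruct Htop as [x1 Hx1]. apply Rle_antisym.
    + apply (sup_least _ _ (Hsup chi)). intros z [x [t [_ ->]]].
      apply Rbar_min_le_iff. right. rewrite Hchi. lra.
    + apply (le_sup _ _ (Hsup chi) (Fin c)); [|simpl; lra].
      exists x1, 1. split; [exact Hx1|]. rewrite (xi_1 xi Hxi), Hchi. reflexivity.
  - intros phi psi chi Hchi. apply Rle_antisym.
    + apply (sup_least _ _ (Hsup chi)). intros z [x [t [Hxt ->]]].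
      set (M := Rmax (hX d xi A phi) (hX d xi A psi)).
      assert (Hphi : Rbar_le (Rbar_min (xi t) (fn phi x)) (Fin M)).
      { eapply Rbar_le_trans; [apply (sup_ub _ _ (Hsup phi)); exists x, t; auto|].
        simpl; apply Rmax_l. }
      assert (Hpsi : Rbar_le (Rbar_min (xi t) (fn psi x)) (Fin M)).
      { eapply Rbar_le_trans; [apply (sup_ub _ _ (Hsup psi)); exists x, t; auto|].
        simpl; apply Rmax_r. }
      apply Rbar_min_le_iff in Hphi, Hpsi. apply Rbar_min_le_iff. rewrite Hchi.
      destruct Hphi; [left; auto|]. destruct Hpsi; [left; auto|]. right. apply Rmax_lub; auto.
    + apply Rmax_lub; apply hX_mono; auto; intros x; rewrite Hchi; [apply Rmax_l|apply Rmax_r].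
  - intros c phi chi Hchi. apply Rle_antisym.
    + apply Rmin_glb.
      * apply (sup_least _ _ (Hsup chi)). intros z [x [t [_ ->]]].
        apply Rbar_min_le_iff. right. rewrite Hchi. apply Rmin_l.
      * apply hX_mono; auto. intros x. rewrite Hchi. apply Rmin_r.
    + set (m := hX d xi A chi). destruct (Rle_dec c m) as [Hcm|Hmc];
        [eapply Rle_trans; [apply Rmin_l|exact Hcm]|].
      eapply Rle_trans; [apply Rmin_r|].
      (* As [m < c], [Rmin c phi] and [phi] exceed [m] at the same points. *)
      apply (sup_least _ _ (Hsup phi)). intros z [x [t [Hxt ->]]].
      assert (Hle : Rbar_le (Rbar_min (xi t) (fn chi x)) (Fin m))
        by (apply (sup_ub _ _ (Hsup chi)); exists x, t; auto).
      rewrite Hchi in Hle. apply Rbar_min_le_iff in Hle as [Hle|Hle]; apply Rbar_min_le_iff;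
        [left; exact Hle|right]. unfold Rmin in Hle; destruct Rle_dec in Hle; lra.
Qed.

End HX.

Section Continuity.
Context {X : Type} (d : X -> X -> R) (xi : R -> Rbar).
Hypotheses (HX : compact_metric_space d) (Hxi : order_homeo xi).

(** Cone-close points carry close values of [min(xi t, phi x)], as long as [t] stays away
    from the vertex, where the cone metric does not control the distance in [X]. *)
Lemma hset_transfer (phi : CX d) e du delta sa sb u v x s y t :
  0 < sa -> sa < sb -> sb <= 1 -> xi sa = Fin u -> xi sb = Fin v -> u + e <= v -> 0 < du ->
  (forall x y, d x y < du -> Rabs (fn phi x - fn phi y) < e) ->
  delta <= Rmin (sb - sa) (du * sa / 2) ->
  0 <= s <= 1 -> 0 <= t <= 1 -> cone_dist d (x, s) (y, t) <= delta ->
  Rbar_le (Fin v) (Rbar_min (xi s) (fn phi x)) ->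
  Rbar_le (Fin u) (Rbar_min (xi t) (fn phi y)).
Proof.
  intros Hsa Hab Hsb Ea Eb Huv Hdu Hu Hdelta Hs Ht Hc Hv.
  pose proof (Rmin_l (sb - sa) (du * sa / 2)). pose proof (Rmin_r (sb - sa) (du * sa / 2)).
  apply Rbar_min_ge_iff in Hv as [Hxs Hphi].
  rewrite <- Eb in Hxs. apply xi_le_iff in Hxs; auto; [|lra].
  pose proof (cone_dist_time d (proj1 HX) (x, s) (y, t) ltac:(simpl; lra) ltac:(simpl; lra))
    as Htime.
  pose proof (cone_dist_space d (x, s) (y, t)) as Hspace. simpl in Htime, Hspace.
  assert (Hta : sa <= t) by (unfold Rabs in Htime; destruct Rcase_abs; lra).
  assert (Hmin : sa <= Rmin s t) by (apply Rmin_glb; lra).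
  assert (Hxy : d x y < du).
  { pose proof (metric_nonneg d (proj1 HX) x y).
    assert (sa * d x y <= du * sa / 2) by nra. nra. }
  specialize (Hu x y Hxy). apply Rabs_def2 in Hu.
  apply Rbar_min_ge_iff. split; [|lra]. rewrite <- Ea. apply xi_le_iff; auto; lra.
Qed.

Lemma hX_continuous A (phi : CX d) eps : in_barJ d A -> 0 < eps ->
  exists delta, 0 < delta /\ forall B, in_barJ d B -> hausdorff_le d A B delta ->
    Rabs (hX d xi B phi - hX d xi A phi) < eps.
Proof.
  intros HA He. pose proof (hX_is_sup d xi HX Hxi A (barJ_top d A HA) phi) as SA.
  set (m := hX d xi A phi) in *.
  destruct (xi_preimage xi Hxi (m - eps / 2)) as [sa [Hsa Ea]].
  destruct (xi_preimage xi Hxi (m - eps / 4)) as [sb [Hsb Eb]].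
  destruct (xi_preimage xi Hxi (m + eps / 4)) as [sc [Hsc Ec]].
  destruct (xi_preimage xi Hxi (m + eps / 2)) as [sd [Hsd Ed]].
  assert (Hab : sa < sb)
    by (apply (xi_fin_lt_iff xi Hxi sa sb (m - eps / 2) (m - eps / 4)); auto; lra).
  assert (Hcd : sc < sd)
    by (apply (xi_fin_lt_iff xi Hxi sc sd (m + eps / 4) (m + eps / 2)); auto; lra).
  destruct (uniformly_continuous d HX (fn phi) (proj2_sig phi) (eps / 4) ltac:(lra))
    as [du [Hdu Hu]].
  set (delta1 := Rmin (sb - sa) (du * sa / 2)). set (delta2 := Rmin (sd - sc) (du * sc / 2)).
  exists (Rmin delta1 delta2). split.
  { apply Rmin_glb_lt; apply Rmin_glb_lt; nra. }
  intros B HB [HAB HBA].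
  pose proof (hX_is_sup d xi HX Hxi B (barJ_top d B HB) phi) as SB.
  pose proof (Rmin_l delta1 delta2). pose proof (Rmin_r delta1 delta2).
  assert (Low : m - eps / 2 <= hX d xi B phi).
  { destruct (sup_approx _ _ SA (m - eps / 4) ltac:(lra)) as [z [[x [s [Hxs ->]]] Hz]].
    destruct (HAB (x, s) Hxs) as [[y t] [Hyt Hc]].
    apply (le_sup _ _ SB (Rbar_min (xi t) (fn phi y))); [exists y, t; auto|].
    apply (hset_transfer phi (eps / 4) du (Rmin delta1 delta2) sa sb
             (m - eps / 2) (m - eps / 4) x s); auto; try lra.
    - exact (barJ_strip d A HA x s Hxs).
    - exact (barJ_strip d B HB y t Hyt).
    - apply Rbar_not_le, Hz. }
  assert (Up : hX d xi B phi <= m + eps / 2).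
  { apply (sup_least _ _ SB). intros z [y [t [Hyt ->]]]. apply NNPP; intros Hz.
    destruct (HBA (y, t) Hyt) as [[x s] [Hxs Hc]].
    rewrite (cone_dist_sym d (proj1 HX)) in Hc.
    assert (Hxs_val : Rbar_le (Fin (m + eps / 4)) (Rbar_min (xi s) (fn phi x))).
    { apply (hset_transfer phi (eps / 4) du (Rmin delta1 delta2) sc sd
               (m + eps / 4) (m + eps / 2) y t); auto; try lra.
      - exact (barJ_strip d B HB y t Hyt).
      - exact (barJ_strip d A HA x s Hxs).
      - apply Rbar_not_le, Hz. }
    assert (m + eps / 4 <= m); [|lra].
    apply (le_sup _ _ SA _ _ (ex_intro _ x (ex_intro _ s (conj Hxs eq_refl))) Hxs_val). }
  apply Rabs_def1; lra.
Qed.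
End Continuity.

Lemma list_pos_lower_bound {T : Type} (P : T -> Prop) (f : T -> R) (l : list T) :
  (forall x, In x l -> P x -> 0 < f x) ->
  exists delta, 0 < delta /\ forall x, In x l -> P x -> delta <= f x.
Proof.
  induction l as [|a l IH]; intros Hpos; [exists 1; split; [lra|intros x []]|].
  destruct IH as [delta [Hd Hl]]; [intros x Hx; apply Hpos; right; exact Hx|].
  destruct (classic (P a)) as [Pa|nPa].
  - exists (Rmin delta (f a)). split; [apply Rmin_glb_lt; auto; apply Hpos; [left|]; auto|].
    intros x [<-|Hx] Px; [apply Rmin_r|]. eapply Rle_trans; [apply Rmin_l|auto].
  - exists delta. split; [exact Hd|]. intros x [<-|Hx] Px; [contradiction|auto].
Qed.

Section Probes.
Context {X : Type} (d : X -> X -> R) (xi : R -> Rbar).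
Hypotheses (HX : compact_metric_space d) (Hxi : order_homeo xi).
Variable eps : R.
Hypothesis He : 0 < eps.

Definition level (s : R) : R := match xi s with Fin v => v | _ => 0 end.

Lemma level_spec s : 0 < s < 1 -> xi s = Fin (level s).
Proof. intros Hs. unfold level. destruct (xi_finite xi Hxi s Hs) as [v ->]. reflexivity. Qed.

(** Tests whether a set in [bar J(X)] reaches height [tau - eps/4] near [w]: the
    tent climbs from [xi (tau - eps/4)] to [xi (tau - eps/8)] within radius [eps/4] of [w]. *)
Definition probe (p : X * R) : CX d :=
  tent d (proj1 HX) (fst p) (level (snd p - eps / 4)) (level (snd p - eps / 8)) (eps / 4).

Definition probe_gap (tau : R) : R := (level (tau - eps / 8) - level (tau - eps / 4)) / 4.

Section Level.
Variable tau : R.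
Hypothesis Htau : eps / 4 < tau <= 1.

Lemma probe_levels_lt : level (tau - eps / 4) < level (tau - eps / 8).
Proof.
  apply (xi_fin_lt_iff xi Hxi (tau - eps / 4) (tau - eps / 8)); try lra; apply level_spec; lra.
Qed.

Lemma probe_lower A w y t :
  in_barJ d A -> A (y, t) -> tau - eps / 8 <= t -> d w y <= eps / 16 ->
  level (tau - eps / 8) - probe_gap tau <= hX d xi A (probe (w, tau)).
Proof.
  intros HA Hyt Ht Hwy. pose proof probe_levels_lt as Hlh. unfold probe_gap.
  apply (le_sup _ _ (hX_is_sup d xi HX Hxi A (barJ_top d A HA) _)
           (Rbar_min (xi t) (fn (probe (w, tau)) y))); [exists y, t; auto|].
  apply Rbar_min_ge_iff. split.
  - assert (Hhi : Rbar_le (xi (tau - eps / 8)) (xi t))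
      by (pose proof (barJ_strip d A HA y t Hyt); apply xi_le_iff; auto; lra).
    rewrite (level_spec (tau - eps / 8)) in Hhi by lra.
    eapply Rbar_le_trans; [|exact Hhi]. simpl; lra.
  - eapply Rle_trans; [|apply tent_ge]. simpl.
    set (lo := level (tau - eps / 4)) in *. set (hi := level (tau - eps / 8)) in *.
    assert (Hslope : (hi - lo) / (eps / 4) * d w y <= (hi - lo) / (eps / 4) * (eps / 16))
      by (apply Rmult_le_compat_l; [apply Rle_mult_inv_pos|]; lra).
    replace ((hi - lo) / (eps / 4) * (eps / 16)) with ((hi - lo) / 4) in Hslope by (field; lra).
    lra.
Qed.

Lemma probe_witness A w : in_barJ d A ->
  (level (tau - eps / 4) + level (tau - eps / 8)) / 2 < hX d xi A (probe (w, tau)) ->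
  exists z s, A (z, s) /\ tau - eps / 4 < s /\ d w z < eps / 8.
Proof.
  intros HA Hmid. pose proof probe_levels_lt as Hlh.
  destruct (sup_approx _ _ (hX_is_sup d xi HX Hxi A (barJ_top d A HA) _) _ Hmid)
    as [z [[x [s [Hxs ->]]] Hz]].
  rewrite Rbar_min_le_iff in Hz. exists x, s. split; [exact Hxs|]. split.
  - apply Rnot_le_lt. intros Hs. apply Hz. left.
    assert (Hlo : Rbar_le (xi s) (xi (tau - eps / 4)))
      by (pose proof (barJ_strip d A HA x s Hxs); apply xi_le_iff; auto; lra).
    rewrite (level_spec (tau - eps / 4)) in Hlo by lra.
    eapply Rbar_le_trans; [exact Hlo|]. simpl; lra.
  - replace (eps / 8) with (eps / 4 / 2) by field.
    apply (tent_above_mid d (proj1 HX) w (level (tau - eps / 4)) (level (tau - eps / 8)));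
      [exact Hlh|lra|]. apply Rnot_le_lt. intros Hle. apply Hz. right. exact Hle.
Qed.

End Level.

(** A point of [A] well above the vertex makes the probe at a nearby net point large on [A],
    hence on [B], and a large probe value on [B] exhibits a point of [B] nearby. *)
Lemma probe_approximation A B net : in_barJ d A -> in_barJ d B ->
  (forall q, In q net -> unit_strip q) ->
  (forall p, unit_strip p -> exists q, In q net /\ prod_dist d q p < eps / 16) ->
  (forall w tau, In (w, tau) net -> eps / 4 < tau <= 1 ->
     Rabs (hX d xi B (probe (w, tau)) - hX d xi A (probe (w, tau))) < probe_gap tau) ->
  forall a, A a -> exists b, B b /\ cone_dist d a b <= eps.
Proof.
  intros HA HB Hstrip Hnet Hclose [y t] Hyt. pose proof (barJ_strip d A HA y t Hyt) as Ht.
  pose proof (proj1 HX) as Hm.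
  destruct (Rle_dec t eps) as [Hsmall|Hbig].
  { exists (y, 0). split; [apply (barJ_vertex d B HB)|].
    unfold cone_dist; simpl. rewrite Rmin_right, Rminus_0_r, Rabs_pos_eq by lra. lra. }
  destruct (Hnet (y, t) Ht) as [[w tau] [Hin Hwt]]. unfold prod_dist in Hwt; simpl in Hwt.
  pose proof (metric_nonneg d Hm w y). pose proof (Rabs_pos (tau - t)).
  assert (Htau : t - eps / 16 < tau < t + eps / 16)
    by (unfold Rabs in Hwt; destruct Rcase_abs; lra).
  assert (Htau1 : tau <= 1) by apply (Hstrip _ Hin).
  pose proof (probe_lower tau ltac:(lra) A w y t HA Hyt ltac:(lra) ltac:(lra)) as Hlow.
  specialize (Hclose w tau Hin ltac:(lra)). apply Rabs_def2 in Hclose. unfold probe_gap in *.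
  destruct (probe_witness tau ltac:(lra) B w HB ltac:(lra)) as [z [s [Hzs [Hs Hwz]]]].
  pose proof (barJ_strip d B HB z s Hzs) as Hs01.
  exists (z, Rmin s t). split.
  - apply (barJ_saturated d B HB z s); auto. split; [apply Rmin_glb; lra|apply Rmin_l].
  - eapply Rle_trans; [apply (cone_dist_le_prod d Hm)|]; unfold unit_strip; simpl; auto.
    { split; [apply Rmin_glb|eapply Rle_trans; [apply Rmin_r|]]; lra. }
    unfold prod_dist; simpl. pose proof (metric_tri d Hm y w z) as Hywz.
    rewrite (metric_sym d Hm y w) in Hywz.
    assert (Rabs (t - Rmin s t) <= eps / 16 + eps / 4)
      by (unfold Rmin; destruct Rle_dec; rewrite Rabs_pos_eq; lra).
    lra.
Qed.

End Probes.

Section Inverse.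
Context {X : Type} (d : X -> X -> R) (xi : R -> Rbar).
Hypotheses (HX : compact_metric_space d) (Hxi : order_homeo xi).

Lemma hX_inverse_continuous A eps : in_barJ d A -> 0 < eps ->
  exists (phis : list (CX d)) delta, 0 < delta /\
    forall B, in_barJ d B ->
      (forall phi, In phi phis -> Rabs (hX d xi B phi - hX d xi A phi) < delta) ->
      hausdorff_le d A B eps.
Proof.
  intros HA He. pose proof (proj1 HX) as Hm.
  destruct (seq_compact_finite_net (prod_dist d) unit_strip (prod_dist_sym d Hm)
              (prod_dist_tri d Hm) (prod_seq_compact d (proj2 HX)) (eps / 16) ltac:(lra))
    as [net [Hstrip Hnet]].
  destruct (list_pos_lower_bound (fun p => eps / 4 < snd p <= 1)
              (fun p => probe_gap xi eps (snd p)) net) as [delta [Hdelta Hgap]].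
  { intros [w tau] _ Htau. simpl in *. unfold probe_gap.
    pose proof (probe_levels_lt xi Hxi eps He tau Htau). lra. }
  set (P := probe d xi HX eps).
  exists (map P net), delta. split; [exact Hdelta|].
  intros B HB Hclose.
  assert (Hclose' : forall w tau, In (w, tau) net -> eps / 4 < tau <= 1 ->
            Rabs (hX d xi B (P (w, tau)) - hX d xi A (P (w, tau))) < probe_gap xi eps tau).
  { intros w tau Hin Htau. eapply Rlt_le_trans; [apply Hclose, in_map, Hin|].
    exact (Hgap (w, tau) Hin Htau). }
  split.
  - exact (probe_approximation d xi HX Hxi eps He A B net HA HB Hstrip Hnet Hclose').
  - intros b Hb.
    destruct (probe_approximation d xi HX Hxi eps He B A net HB HA Hstrip Hnet) with b
      as [a [Ha Hab]]; [|exact Hb|].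
    + intros w tau Hin Htau. rewrite Rabs_minus_sym. exact (Hclose' w tau Hin Htau).
    + exists a. split; [exact Ha|]. rewrite (cone_dist_sym d Hm). exact Hab.
Qed.

Lemma hX_injective (Hdiam : diam_le_1 d) A B : in_barJ d A -> in_barJ d B ->
  (forall phi, hX d xi A phi = hX d xi B phi) -> forall p, A p -> B p.
Proof.
  intros HA HB Heq [x t] Hxt. pose proof (proj1 HX) as Hm.
  pose proof (barJ_strip d A HA x t Hxt) as Ht.
  destruct (Req_dec t 0) as [->|Ht0]; [apply (barJ_vertex d B HB)|].
  assert (Happrox : forall eps, 0 < eps -> exists b, B b /\ cone_dist d (x, t) b < eps).
  { intros eps He.
    destruct (hX_inverse_continuous A (eps / 2) HA ltac:(lra)) as [phis [delta [Hdelta Hinv]]].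
    destruct (Hinv B HB) as [HAB _].
    { intros phi _. rewrite Heq, Rminus_diag, Rabs_R0. exact Hdelta. }
    destruct (HAB (x, t) Hxt) as [b [Hb Hxb]]. exists b. split; [exact Hb|lra]. }
  set (S := fun q : X * R => 0 <= snd q).
  destruct (seq_compact_closed (cone_dist d) S B) with (p := (x, t))
    as [l [Hl Hxl]]; unfold S in *.
  - intros p q Hp Hq. exact (cone_dist_nonneg d Hm p q Hp Hq).
  - intros p q r Hp Hq Hr. exact (cone_dist_tri d Hm Hdiam p q r Hp Hq Hr).
  - intros [y s] Hys. exact (proj1 (barJ_strip d B HB y s Hys)).
  - exact (barJ_seq_compact d B HB).
  - simpl; lra.
  - exact Happrox.
  - destruct l as [y s]. pose proof (barJ_strip d B HB y s Hl).
    rewrite (cone_dist_eq0 d Hm (x, t) (y, s)); simpl; auto; lra.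
Qed.

End Inverse.

Section MaxMinMeasures.
Context {X : Type} {d : X -> X -> R} (mu : CX d -> R).
Hypothesis Hmu : is_maxmin mu.

Lemma maxmin_const c : mu (ccst d c) = c.
Proof. apply Hmu. reflexivity. Qed.

Lemma maxmin_max f g : mu (cmax d f g) = Rmax (mu f) (mu g).
Proof. apply Hmu. reflexivity. Qed.

Lemma maxmin_minc c f : mu (cminc d c f) = Rmin c (mu f).
Proof. apply Hmu. reflexivity. Qed.

Lemma maxmin_mono f g : (forall x, fn f x <= fn g x) -> mu f <= mu g.
Proof.
  intros Hfg. rewrite (proj1 (proj2 Hmu) f g g); [apply Rmax_l|].
  intros x. rewrite Rmax_right; auto.
Qed.

Lemma maxmin_finite_join {I : Type} c (g : X -> R) (U : I -> X -> Prop) (l : list I) :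
  (forall i, In i l -> exists f, mu f < c /\ forall z, U i z -> g z <= fn f z) ->
  exists G, mu G < c /\ forall i, In i l -> forall z, U i z -> g z <= fn G z.
Proof.
  induction l as [|i l IH]; intros Hl.
  - exists (ccst d (c - 1)). rewrite maxmin_const. split; [lra|intros i []].
  - destruct IH as [G [HG HGl]]; [intros j Hj; apply Hl; right; exact Hj|].
    destruct (Hl i (or_introl eq_refl)) as [f [Hf Hfi]].
    exists (cmax d f G). rewrite maxmin_max. split; [apply Rmax_lub_lt; auto|].
    intros j [<-|Hj] z Hz; simpl.
    + eapply Rle_trans; [apply Hfi, Hz|apply Rmax_l].
    + eapply Rle_trans; [apply (HGl j Hj z Hz)|apply Rmax_r].
Qed.

Definition locally_below (x : X) (c : R) : Prop :=
  exists r, 0 < r /\ exists f : CX d, (forall y, d x y < r -> c <= fn f y) /\ mu f < c.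

End MaxMinMeasures.

Section Surjectivity.
Context {X : Type} (d : X -> X -> R) (xi : R -> Rbar).
Hypotheses (HX : compact_metric_space d) (Hxi : order_homeo xi).
Variable mu : CX d -> R.
Hypothesis Hmu : is_maxmin mu.

Lemma locally_below_open x c : locally_below mu x c ->
  exists r, 0 < r /\ forall y, d x y < r -> locally_below mu y c.
Proof.
  intros [r [Hr [f [Hf Hmf]]]]. exists (r / 2). split; [lra|]. intros y Hy.
  exists (r / 2). split; [lra|]. exists f. split; [|exact Hmf].
  intros z Hz. apply Hf. pose proof (metric_tri d (proj1 HX) x y z). lra.
Qed.

Lemma locally_below_mono x c c' : locally_below mu x c -> c <= c' -> locally_below mu x c'.
Proof.
  intros [r [Hr [f [Hf Hmf]]]] Hcc'.
  destruct (continuous_bounded d HX (fn f) (proj2_sig f)) as [M HM].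
  set (lo := Rmin (- M) c'). set (hi := c' + 1).
  assert (Hlo : lo <= - M /\ lo <= c') by (split; [apply Rmin_l|apply Rmin_r]).
  set (b := tent d (proj1 HX) x lo hi r).
  (* [Rmin c b <= f]: inside the ball [f >= c], outside it [b = lo <= f]. *)
  assert (Hb : mu b < c).
  { assert (Hbf : Rmin c (mu b) <= mu f); [|unfold Rmin in Hbf; destruct Rle_dec in Hbf; lra].
    rewrite <- (maxmin_minc mu Hmu). apply (maxmin_mono mu Hmu). intros y. simpl.
    destruct (Rlt_dec (d x y) r) as [Hy|Hy].
    - eapply Rle_trans; [apply Rmin_l|apply Hf, Hy].
    - eapply Rle_trans; [apply Rmin_r|].
      change (fn b y <= fn f y). unfold b. rewrite tent_far by (unfold hi; lra).
      specialize (HM y). pose proof (Rle_abs (- fn f y)) as Hfy. rewrite Rabs_Ropp in Hfy. lra. }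
  exists (r / (hi - lo)). split; [apply Rdiv_lt_0_compat; unfold hi; lra|].
  exists b. split; [|lra]. intros y Hy. eapply Rle_trans; [|apply tent_ge].
  assert ((hi - lo) / r * d x y < 1); [|unfold hi in *; lra].
  apply Rmult_lt_compat_l with (r := (hi - lo) / r) in Hy;
    [|apply Rdiv_lt_0_compat; unfold hi; lra].
  replace ((hi - lo) / r * (r / (hi - lo))) with 1 in Hy by (field; unfold hi; lra). exact Hy.
Qed.

(** If all such [x] were locally below [c], finitely many balls, each carrying a function of
    [mu]-value below [c] that dominates [Rmin c phi] there, would give [mu (Rmin c phi) < c]. *)
Lemma exists_not_locally_below (phi : CX d) c' c : c' < c -> c < mu phi ->
  exists x, c' <= fn phi x /\ ~ locally_below mu x c.
Proof.
  intros Hc'c Hcm. pose proof (proj1 HX) as Hm. apply NNPP; intros Hno.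
  set (Good := fun U : X -> Prop =>
         exists f, mu f < c /\ forall z, U z -> Rmin c (fn phi z) <= fn f z).
  destruct (lebesgue_number d HX Good) as [s [Hs Hgood]].
  - intros U V [f [Hf HfU]] HVU. exists f. split; auto.
  - intros x. destruct (Rle_dec c' (fn phi x)) as [Hx|Hx].
    + assert (Hb : locally_below mu x c) by (apply NNPP; intros Hb; apply Hno; eauto).
      destruct Hb as [r [Hr [f [Hf Hmf]]]]. exists r. split; [exact Hr|].
      exists f. split; [exact Hmf|]. intros z Hz. eapply Rle_trans; [apply Rmin_l|auto].
    + destruct (proj2_sig phi x (c' - fn phi x) ltac:(lra)) as [r [Hr Hclose]].
      exists r. split; [exact Hr|]. exists (cminc d c' phi).
      rewrite (maxmin_minc mu Hmu). split; [eapply Rle_lt_trans; [apply Rmin_l|exact Hc'c]|].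
      intros z Hz. specialize (Hclose z Hz). apply Rabs_def2 in Hclose. simpl. unfold fn in *.
      rewrite (Rmin_right c), (Rmin_right c'); lra.
  - destruct (seq_compact_finite_net d (fun _ => True) (metric_sym d Hm) (metric_tri d Hm)
                (proj2 HX) s Hs) as [net [_ Hnet]].
    destruct (maxmin_finite_join mu Hmu c (fun z => Rmin c (fn phi z)) (fun w z => d w z < s) net)
      as [G [HG HGnet]]; [intros w _; apply Hgood|].
    assert (HphiG : mu (cminc d c phi) <= mu G).
    { apply (maxmin_mono mu Hmu). intros z. destruct (Hnet z I) as [w [Hw Hwz]].
      exact (HGnet w Hw z Hwz). }
    rewrite (maxmin_minc mu Hmu), Rmin_left in HphiG by lra. lra.
Qed.

(** The candidate preimage of [mu]: above [x], the height [xi t] is capped by every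
    level [c] that [mu] stays below near [x]. *)
Definition maxmin_preimage (p : X * R) : Prop :=
  0 <= snd p <= 1 /\ forall c, locally_below mu (fst p) c -> Rbar_le (xi (snd p)) (Fin c).

Lemma maxmin_preimage_level x c : ~ locally_below mu x c ->
  exists t, maxmin_preimage (x, t) /\ xi t = Fin c.
Proof.
  intros Hc. destruct (xi_preimage xi Hxi c) as [t [Ht E]]. exists t. split; [|exact E].
  split; simpl; [lra|]. intros c' Hc'. rewrite E. simpl. apply Rnot_lt_le. intros Hlt.
  apply Hc, (locally_below_mono x c'); [exact Hc'|lra].
Qed.

Lemma maxmin_preimage_above (phi : CX d) w : w < mu phi ->
  exists x t, maxmin_preimage (x, t) /\ ~ Rbar_le (Rbar_min (xi t) (fn phi x)) (Fin w).
Proof.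
  intros Hw.
  destruct (exists_not_locally_below phi (w + (mu phi - w) / 3) (w + 2 * (mu phi - w) / 3))
    as [x [Hx Hn]]; [lra|lra|].
  destruct (maxmin_preimage_level x _ Hn) as [t [Ht E]].
  exists x, t. split; [exact Ht|]. rewrite E, Rbar_min_le_iff. simpl. lra.
Qed.

Lemma maxmin_preimage_sup (phi : CX d) : is_sup_Rbar (hset xi maxmin_preimage phi) (mu phi).
Proof.
  split.
  - intros z [x [t [[Ht Hcap] ->]]]. apply NNPP; intros Hn.
    rewrite Rbar_min_le_iff in Hn. apply not_or_and in Hn as [Hxi_t Hphi].
    destruct (Rbar_gap _ _ (fn phi x) Hxi_t ltac:(lra)) as [c [Hc Hxi_c]].
    apply Hxi_c, Hcap. simpl.
    destruct (proj2_sig phi x (fn phi x - c) ltac:(lra)) as [r [Hr Hclose]].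
    exists r. split; [exact Hr|]. exists phi. split; [|lra].
    intros y Hy. specialize (Hclose y Hy). apply Rabs_def2 in Hclose. unfold fn in *. lra.
  - intros [v| |] Hub; simpl; [|exact I|].
    + apply Rnot_lt_le. intros Hlt.
      destruct (maxmin_preimage_above phi v Hlt) as [x [t [Hxt Hn]]].
      apply Hn, Hub. exists x, t; auto.
    + destruct (maxmin_preimage_above phi (mu phi - 1) ltac:(lra)) as [x [t [Hxt Hn]]].
      apply Hn. eapply Rbar_le_trans; [apply Hub; exists x, t; auto|exact I].
Qed.

Lemma maxmin_preimage_top : exists x, maxmin_preimage (x, 1).
Proof.
  pose proof (proj1 HX) as Hm.
  assert (Hex : forall n : nat, exists x, ~ locally_below mu x (INR n + 1)).
  { intros n. destruct (exists_not_locally_below (ccst d (INR n + 2)) (INR n) (INR n + 1))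
      as [x [_ Hx]]; [lra|rewrite (maxmin_const mu Hmu); lra|eauto]. }
  destruct (choice _ Hex) as [u Hu]. destruct (compact_cluster d HX u) as [x Hx].
  exists x. split; simpl; [lra|]. intros c Hc. exfalso.
  destruct (locally_below_open x c Hc) as [r [Hr Hnear]].
  destruct (INR_unbounded c) as [N HN].
  destruct (Hx r N Hr) as [n [HNn Hxn]]. rewrite (metric_sym d Hm) in Hxn.
  apply (Hu n), (locally_below_mono (u n) c); [exact (Hnear _ Hxn)|].
  assert (INR N <= INR n) by (apply le_INR; lia). lra.
Qed.

Lemma maxmin_preimage_closed u x t : (forall n, maxmin_preimage (u n)) -> 0 <= t <= 1 ->
  seq_conv (prod_dist d) u (x, t) -> maxmin_preimage (x, t).
Proof.
  intros Hu Ht Hconv. pose proof (proj1 HX) as Hm.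
  split; [exact Ht|]. simpl. intros c Hc. apply NNPP; intros Hn.
  destruct (xi_preimage xi Hxi c) as [sc [Hsc Ec]].
  assert (Hsct : sc < t).
  { apply Rnot_le_lt. intros Hle. apply Hn. rewrite <- Ec. apply xi_le_iff; auto; lra. }
  destruct (locally_below_open x c Hc) as [r [Hr Hnear]].
  destruct (Hconv (Rmin r (t - sc)) ltac:(apply Rmin_glb_lt; lra)) as [N HN].
  specialize (HN N (le_n N)). unfold prod_dist in HN.
  pose proof (Rmin_l r (t - sc)). pose proof (Rmin_r r (t - sc)).
  destruct (u N) as [y s] eqn:E. simpl in HN.
  pose proof (Rabs_pos (s - t)). pose proof (metric_nonneg d Hm y x).
  destruct (Hu N) as [Hs Hcap]. rewrite E in Hs, Hcap. simpl in Hs, Hcap.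
  specialize (Hcap c (Hnear y ltac:(rewrite (metric_sym d Hm); lra))).
  rewrite <- Ec in Hcap. apply (xi_le_iff xi Hxi) in Hcap; [|lra|lra].
  unfold Rabs in HN; destruct Rcase_abs in HN; lra.
Qed.

Lemma maxmin_preimage_barJ : in_barJ d maxmin_preimage.
Proof.
  pose proof (proj1 HX) as Hm. pose proof maxmin_preimage_top as [x1 Hx1].
  split; [|split; [exists (x1, 1); exact Hx1|split; [|split; [|exists x1; exact Hx1]]]].
  - split; [intros x t [Ht _]; exact Ht|].
    intros x y _. split; simpl; [lra|]. intros c _. rewrite (xi_0 xi Hxi). exact I.
  - intros u Hu.
    destruct (prod_seq_compact d (proj2 HX) u (fun n => proj1 (Hu n)))
      as [g [[x t] [Hg [Ht Hconv]]]].
    exists g, (x, t). split; [exact Hg|]. split.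
    + exact (maxmin_preimage_closed (fun n => u (g n)) x t (fun n => Hu (g n)) Ht Hconv).
    + intros eps He. destruct (Hconv eps He) as [N HN]. exists N. intros n Hn.
      eapply Rle_lt_trans; [apply (cone_dist_le_prod d Hm)|apply HN, Hn]; [apply Hu|exact Ht].
  - intros x t t' [Ht Hcap] Ht'. split; [simpl in *; lra|]. intros c Hc.
    eapply Rbar_le_trans; [|exact (Hcap c Hc)]. simpl in *. apply (xi_le_iff xi Hxi); lra.
Qed.

Lemma hX_surjective : exists A, in_barJ d A /\ forall phi, hX d xi A phi = mu phi.
Proof.
  exists maxmin_preimage. split; [exact maxmin_preimage_barJ|]. intros phi.
  apply (is_sup_Rbar_unique (hset xi maxmin_preimage phi)); [|apply maxmin_preimage_sup].
  apply (hX_is_sup d xi HX Hxi), maxmin_preimage_barJ.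
Qed.

End Surjectivity.

Theorem mainTheorem11 (X : Type) (d : X -> X -> R) (xi : R -> Rbar)
  (HX : compact_metric_space d) (Hdiam : diam_le_1 d) (Hxi : order_homeo xi) :
  (* h_X(A) is well defined (the supremum is a real number) and lies in J(X) *)
  (forall A, in_barJ d A ->
     (forall phi : CX d, is_sup_Rbar (hset xi A phi) (hX d xi A phi)) /\
     is_maxmin (hX d xi A)) /\
  (* h_X is injective *)
  (forall A B, in_barJ d A -> in_barJ d B ->
     (forall phi : CX d, hX d xi A phi = hX d xi B phi) ->
     forall p, A p <-> B p) /\
  (* h_X is surjective onto J(X) *)
  (forall mu : CX d -> R, is_maxmin mu ->
     exists A, in_barJ d A /\ forall phi, hX d xi A phi = mu phi) /\
  (* h_X is continuous (Hausdorff metric -> pointwise convergence) *)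
  (forall A (phi : CX d) eps, in_barJ d A -> 0 < eps ->
     exists delta, 0 < delta /\
       forall B, in_barJ d B -> hausdorff_le d A B delta ->
         Rabs (hX d xi B phi - hX d xi A phi) < eps) /\
  (* h_X^{-1} is continuous (pointwise convergence -> Hausdorff metric) *)
  (forall A eps, in_barJ d A -> 0 < eps ->
     exists (phis : list (CX d)) delta, 0 < delta /\
       forall B, in_barJ d B ->
         (forall phi, In phi phis -> Rabs (hX d xi B phi - hX d xi A phi) < delta) ->
         hausdorff_le d A B eps).
Proof.
  split; [|split; [|split; [|split]]].
  - intros A HA. pose proof (barJ_top d A HA) as Htop.
    split; [exact (hX_is_sup d xi HX Hxi A Htop)|exact (hX_maxmin d xi HX Hxi A Htop)].
  - intros A B HA HB Heq p. split; apply (hX_injective d xi HX Hxi Hdiam); auto.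
  - exact (hX_surjective d xi HX Hxi).
  - intros A phi eps. exact (hX_continuous d xi HX Hxi A phi eps).
  - exact (hX_inverse_continuous d xi HX Hxi).
Qed.
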